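(* Let $\mathfrak{A}$ be a unital $C^*$-algebra, $\theta,\alpha\in\mathrm{Aut}(\mathfrak{A})$, $u\in\mathfrak{A}$ unitary with $u\,\alpha(\theta(a))=\theta(\alpha(a))u$ for all $a$, and suppose $(\mathfrak{A},\theta)$ is topologically ergodic. For $n\in\mathbb{Z}$ let $W_n:=\{a\in\mathfrak{A}\mid \alpha^{-n}(u_n)\theta(a)=a\}$. Then for each $n$, either $W_n=\{0\}$ or $W_n=\mathbb{C}w_n$ for some unitary $w_n\in\mathfrak{A}$.
   Context: The unitaries $u_n$ are defined by $u_0=I$, $u_n=u\alpha(u)\cdots\alpha^{n-1}(u)$ for $n\ge1$, $u_n=\alpha^{-1}(u^* )\alpha^{-2}(u^* )\cdots\alpha^{n}(u^* )$ for $n<0$. $(\mathfrak{A},\theta)$ topologically ergodic means $\{a\in\mathfrak{A}\mid\theta(a)=a\}=\mathbb{C}I$. *)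

From mathcomp Require Import all_boot all_order all_algebra.
From mathcomp Require Import reals.
From mathcomp.real_closed Require Import complex.
Import Order.TTheory GRing.Theory Num.Theory.
Set Implicit Arguments.
Unset Strict Implicit.
Unset Printing Implicit Defensive.
Local Open Scope ring_scope.

Record is_unital_Cstar (R : realType) (A : algType R[i])
    (star : A -> A) (nrm : A -> R) : Prop := {
  star_add : forall x y, star (x + y) = star x + star y;
  star_scale : forall (c : R[i]) x, star (c *: x) = c^* *: star x;
  star_mul : forall x y, star (x * y) = star y * star x;
  star_invol : forall x, star (star x) = x;
  nrm_ge0 : forall x, 0 <= nrm x;
  nrm_eq0 : forall x, nrm x = 0 -> x = 0;
  nrm_triangle : forall x y, nrm (x + y) <= nrm x + nrm y;
  nrm_scale : forall (c : R[i]) x, nrm (c *: x) = Normc.normc c * nrm x;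
  nrm_submul : forall x y, nrm (x * y) <= nrm x * nrm y;
  nrm_Cstar : forall x, nrm (star x * x) = nrm x ^+ 2;
  nrm_complete : forall u : nat -> A,
    (forall e : R, 0 < e -> exists N : nat, forall m n : nat,
        (N <= m)%N -> (N <= n)%N -> nrm (u m - u n) < e) ->
    exists l : A, forall e : R, 0 < e -> exists N : nat, forall n : nat,
        (N <= n)%N -> nrm (u n - l) < e
}.

Definition is_star_aut (R : realType) (A : algType R[i]) (star : A -> A)
    (theta : A -> A) : Prop :=
  (forall x y, theta (x + y) = theta x + theta y) /\
  (forall (c : R[i]) x, theta (c *: x) = c *: theta x) /\
  (forall x y, theta (x * y) = theta x * theta y) /\
  theta 1 = 1 /\
  (forall x, theta (star x) = star (theta x)) /\
  bijective theta.

Definition unitary_elt (R : realType) (A : algType R[i]) (star : A -> A)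
    (u : A) : Prop := star u * u = 1 /\ u * star u = 1.

Definition top_ergodic (R : realType) (A : algType R[i]) (theta : A -> A)
    : Prop :=
  forall a : A, theta a = a <-> exists c : R[i], a = c%:A.

Definition aut_pow (A : Type) (alpha alpha_inv : A -> A) (n : int) : A -> A :=
  match n with
  | Posz m => iter m alpha
  | Negz m => iter m.+1 alpha_inv
  end.

(* The cocycle u_n:  u_0 = 1,
   u_n = u alpha(u) ... alpha^{n-1}(u)  for n >= 1,
   u_n = alpha^{-1}(u^* ) alpha^{-2}(u^* ) ... alpha^{n}(u^* )  for n < 0. *)
Definition cocycle (R : realType) (A : algType R[i]) (star : A -> A)
    (alpha alpha_inv : A -> A) (u : A) (n : int) : A :=
  match n with
  | Posz m => \prod_(k < m) aut_pow alpha alpha_inv (Posz k) u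
  | Negz m => \prod_(k < m.+1) aut_pow alpha alpha_inv (- (Posz k.+1)) (star u)
  end.

Definition W_space (R : realType) (A : algType R[i]) (star : A -> A)
    (theta alpha alpha_inv : A -> A) (u : A) (n : int) : A -> Prop :=
  fun a => aut_pow alpha alpha_inv (- n) (cocycle star alpha alpha_inv u n)
             * theta a = a.

From mathcomp Require Import all_boot all_order all_algebra.
From mathcomp Require Import reals.
From mathcomp.real_closed Require Import complex.
From mathcomp Require Import ring lra.
From Stdlib Require Import Classical.
Import Order.TTheory GRing.Theory Num.Theory.
Set Implicit Arguments.
Unset Strict Implicit.
Unset Printing Implicit Defensive.
Local Open Scope ring_scope.

(* Write v_n := alpha^(-n)(u_n), so that
   W_n = { a | v_n * theta a = a }.
   1. Positivity.  In a unital C*-algebra, -1 is not of the form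
      star z * z = z * star z.  This needs a square root of 1 - a for a
      self-adjoint contraction a, obtained from a fixed-point iteration
      (the only place where completeness is used).
   2. Fixed spaces.  For a unitary v, two elements a, b of
      { a | v * theta a = a } have theta-invariant, hence scalar (ergodicity),
      product star a * b.  If moreover theta o beta = beta o Ad(v) o theta
      for an injective map beta fixing scalars, a * star a is scalar as
      well; by 1. a nonzero solution is then a multiple of a unitary w,
      and every solution is a multiple of w.
   3. Cocycles.  If theta o f = Ad(x) o f o theta for *-automorphisms theta, f
      and a unitary x, the products x f(x) ... f^(j-1)(x) are unitary and
      intertwine theta with f^j, so 2. applies with beta = f^j.
   The theorem follows from 3. with f = alpha (n >= 0) or f = alpha^(-1)
   (n < 0), after rewriting W_n and u_n in terms of iterates. *)

Lemma sqrB_sub_sqrD (T : pzRingType) (x y : T) :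
  (x - y) * (x - y) - (x + y) * (x + y) = - (x * y + y * x) - (x * y + y * x).
Proof.
rewrite mulrBl !mulrBr mulrDl !mulrDr opprB [y * x + y * y]addrC addrACA.
rewrite [x * x + x * y + _]addrACA opprD (addrACA (x * x + y * y)).
by rewrite subrr add0r -opprD.
Qed.

Section CstarAlgebra.
Variables (R : realType) (A : algType R[i]) (star : A -> A) (nrm : A -> R).
Hypothesis HA : is_unital_Cstar star nrm.

Let starD := star_add HA.
Let starM := star_mul HA.
Let starK := star_invol HA.
Let nrm_ge0 := nrm_ge0 HA.
Let nrmD := nrm_triangle HA.
Let nrmM := nrm_submul HA.

Lemma star0 : star 0 = 0.
Proof. by apply/eqP; rewrite -[X in X == _](addrK (star 0)) -starD addr0 subrr. Qed.

Lemma starN x : star (- x) = - star x.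
Proof. by apply/eqP; rewrite -subr_eq0 opprK -starD addNr star0. Qed.

Lemma starB x y : star (x - y) = star x - star y.
Proof. by rewrite starD starN. Qed.

Lemma star1 : star 1 = 1.
Proof. by have := starM (star 1) 1; rewrite mulr1 !starK mulr1 => /esym. Qed.

Lemma star_scalar (c : R[i]) : star c%:A = (c^*)%:A.
Proof. by rewrite (star_scale HA) star1. Qed.

Lemma star_real_scale (r : R) x : star ((r%:C)%C *: x) = (r%:C)%C *: star x.
Proof. by rewrite (star_scale HA) conj_Creal //; apply/complex_realP; exists r. Qed.

Lemma nrm_real_scale (r : R) x : nrm ((r%:C)%C *: x) = `|r| * nrm x.
Proof.
by rewrite (nrm_scale HA) /Normc.normc /= expr0n /= addr0 sqrtr_sqr.
Qed.

Lemma nrm0 : nrm 0 = 0.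
Proof. by have := nrm_real_scale 0 0; rewrite scale0r normr0 mul0r. Qed.

Lemma nrmN x : nrm (- x) = nrm x.
Proof.
have -> : - x = ((-1 : R)%:C)%C *: x by rewrite rmorphN rmorph1 scaleN1r.
by rewrite nrm_real_scale normrN normr1 mul1r.
Qed.

Lemma nrmB_sym x y : nrm (x - y) = nrm (y - x).
Proof. by rewrite -nrmN opprB. Qed.

(* The C*-identity forces the involution to be isometric. *)
Lemma nrm_star x : nrm (star x) = nrm x.
Proof.
have le_star y : nrm y <= nrm (star y).
  have := nrmM (star y) y; rewrite (nrm_Cstar HA) expr2.
  have [->|y0] := eqVneq (nrm y) 0; first by rewrite nrm_ge0.
  by rewrite ler_pM2r // lt0r y0 nrm_ge0.
by apply/eqP; rewrite eq_le le_star -[X in _ <= nrm X]starK le_star.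
Qed.

(* By the C*-identity the unit has norm 1 (A is nontrivial). *)
Lemma nrm1 : nrm 1 = 1.
Proof.
have n0 : nrm 1 != 0 by apply: contra_neq (oner_neq0 A) => /(nrm_eq0 HA).
have := nrm_Cstar HA 1; rewrite star1 mulr1 expr2.
by move/(congr1 (fun t => t / nrm 1)); rewrite mulfK // divff.
Qed.

Lemma star_mul_eq0 x : star x * x = 0 -> x = 0.
Proof.
move=> h; apply: (nrm_eq0 HA); apply/eqP.
by rewrite -sqrf_eq0 -(nrm_Cstar HA) h nrm0.
Qed.

Lemma nrm_small_eq0 x : (forall e : R, 0 < e -> nrm x <= e) -> x = 0.
Proof.
move=> small; apply: (nrm_eq0 HA); apply/eqP; apply: contraT => x0.
have xp : 0 < nrm x by rewrite lt0r x0 nrm_ge0.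
have := small (nrm x / 2) (divr_gt0 xp (ltr0Sn _ 1)); lra.
Qed.

Definition half : R[i] := (((2 : R)^-1)%:C)%C.

Lemma nrm_half x : nrm (half *: x) = 2^-1 * nrm x.
Proof. by rewrite nrm_real_scale ger0_norm // invr_ge0. Qed.

Lemma half_add_half (x : A) : half *: x + half *: x = x.
Proof.
rewrite -scalerDl -rmorphD /=.
have -> : (2 : R)^-1 + 2^-1 = 1 by field.
by rewrite rmorph1 scale1r.
Qed.

(* The iterates
   y_0 = 0, y_(k+1) = (a + y_k^2) / 2 converge to the root L of
   L = (a + L^2) / 2, so that (1 - L)^2 = 1 - a; their increments are
   dominated by those of the scalar iteration t_(k+1) = (1 + t_k^2) / 2,
   which increases to 1 at rate 2 / (k + 2). *)
Section SquareRoot.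
Variable a : A.
Hypothesis a_sa : star a = a.
Hypothesis a_le1 : nrm a <= 1.

Fixpoint sqrt_approx (k : nat) : A :=
  if k is k'.+1 then half *: (a + sqrt_approx k' * sqrt_approx k') else 0.

Fixpoint majorant (k : nat) : R :=
  if k is k'.+1 then 2^-1 * (1 + majorant k' ^+ 2) else 0.

(* Every iterate is a polynomial in a, hence commutes with whatever commutes with a. *)
Lemma approx_comm x :
  x * a = a * x -> forall k, x * sqrt_approx k = sqrt_approx k * x.
Proof.
move=> xa; elim=> [|k IH] /=; first by rewrite mulr0 mul0r.
by rewrite -scalerAr -scalerAl mulrDr mulrDl xa mulrA IH -!mulrA IH.
Qed.

Lemma approx_comm2 j k :
  sqrt_approx j * sqrt_approx k = sqrt_approx k * sqrt_approx j.
Proof. by apply: approx_comm; symmetry; apply: approx_comm. Qed.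

Lemma approx_sa k : star (sqrt_approx k) = sqrt_approx k.
Proof.
elim: k => [|k IH] /=; first exact: star0.
by rewrite star_real_scale starD starM IH a_sa.
Qed.

Lemma majorant_bounds k : 0 <= majorant k <= 1.
Proof.
elim: k => [|k IH] /=; first by rewrite lexx ler01.
case/andP: IH => t0 t1; apply/andP; split.
  by rewrite mulr_ge0 ?invr_ge0 // addr_ge0 // sqr_ge0.
by rewrite ler_pdivrMl // mulr1 -[2]/(1 + 1) lerD2l expr_le1.
Qed.

Lemma approx_le k : nrm (sqrt_approx k) <= majorant k.
Proof.
elim: k => [|k IH] /=; first by rewrite nrm0.
rewrite nrm_half ler_pM2l ?invr_gt0 //.
apply: (le_trans (nrmD _ _)); apply: lerD => //.
by apply: (le_trans (nrmM _ _)); rewrite expr2 ler_pM.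
Qed.

(* y_(k+2) - y_(k+1) = (y_(k+1) - y_k)(y_(k+1) + y_k) / 2, and likewise for t. *)
Lemma approx_step_le k :
  nrm (sqrt_approx k.+1 - sqrt_approx k) <= majorant k.+1 - majorant k.
Proof.
elim: k => [|k IH].
  rewrite /= !subr0 mulr0 addr0 nrm_half expr0n /= addr0 mulr1.
  by rewrite -[X in _ <= X]mulr1 ler_pM2l ?invr_gt0.
have -> : sqrt_approx k.+2 - sqrt_approx k.+1 =
    half *: ((sqrt_approx k.+1 - sqrt_approx k) * (sqrt_approx k.+1 + sqrt_approx k)).
  rewrite [sqrt_approx k.+2]/= [in LHS]/= -scalerBr mulrBl !mulrDr.
  by rewrite (approx_comm2 k k.+1) addrKA opprD addrA [a + _]addrC addrK.
have -> : majorant k.+2 - majorant k.+1 =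
    2^-1 * ((majorant k.+1 - majorant k) * (majorant k.+1 + majorant k)).
  by rewrite [majorant k.+2]/= [majorant k.+1]/=; ring.
rewrite nrm_half ler_pM2l ?invr_gt0 //.
apply: (le_trans (nrmM _ _)); apply: ler_pM => //.
by apply: (le_trans (nrmD _ _)); apply: lerD; apply: approx_le.
Qed.

Lemma approx_dist_le n m :
  (n <= m)%N -> nrm (sqrt_approx m - sqrt_approx n) <= majorant m - majorant n.
Proof.
move=> /subnKC <-; elim: (m - n)%N => [|d IH]; first by rewrite addn0 !subrr nrm0.
rewrite addnS -[sqrt_approx _ - _](subrKA (sqrt_approx (n + d))).
rewrite -[majorant _ - _](subrKA (majorant (n + d))).
by apply: (le_trans (nrmD _ _)); apply: lerD => //; apply: approx_step_le.
Qed.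

(* The gap e_k = 1 - t_k satisfies e_(k+1) = e_k - e_k^2 / 2, whence e_k <= 2/(k+2). *)
Lemma majorant_rate k : 1 - majorant k <= 2 / (k%:R + 2).
Proof.
elim: k => [|k IH]; first by rewrite /= subr0 mulr0n add0r divff // pnatr_eq0.
have /andP[t0 t1] := majorant_bounds k.
set e := 1 - majorant k in IH *; set b := 2 / (k%:R + 2) in IH.
have -> : 1 - majorant k.+1 = e - e ^+ 2 / 2 by rewrite /e /=; field.
have kb : b * (k%:R + 2) = 2 by rewrite /b mulfVK // gt_eqF // ltr_wpDl.
have -> : (k.+1%:R + 2 : R) = k%:R + 3 by rewrite -addn1 natrD; ring.
have k0 : 0 <= k%:R :> R by [].
have b0 : 0 <= b by rewrite /b divr_ge0 // addr_ge0.
rewrite ler_pdivlMr ?ltr_wpDl //.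
have b1 : b <= 1 by nra.
have e_mono : e - e ^+ 2 / 2 <= b - b ^+ 2 / 2 by nra.
apply: (le_trans (ler_wpM2r _ e_mono)); first lra.
have kb2 : b * (b * (k%:R + 2)) = b * 2 by rewrite kb.
have := sqr_ge0 b; nra.
Qed.

Lemma approx_cauchy (e : R) : 0 < e -> exists N : nat, forall m n : nat,
  (N <= m)%N -> (N <= n)%N -> nrm (sqrt_approx m - sqrt_approx n) < e.
Proof.
move=> e0; pose N := Num.Def.archi_bound (2 / e); exists N.
have hN : 2 / e < N%:R by apply: archi_boundP; rewrite divr_ge0 // ltW.
suff close n m : (N <= n)%N -> (n <= m)%N -> nrm (sqrt_approx m - sqrt_approx n) < e.
  move=> m n Nm Nn; case: (leqP n m) => [nm|/ltnW mn]; first exact: close.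
  by rewrite nrmB_sym; apply: close.
move=> Nn nm; apply: (le_lt_trans (approx_dist_le nm)).
have /andP[_ tm] := majorant_bounds m; have rate := majorant_rate n.
have nN : N%:R <= n%:R :> R by rewrite ler_nat.
have : 2 / (n%:R + 2) < e.
  rewrite ltr_pdivrMr ?ltr_wpDl //; move: hN; rewrite ltr_pdivrMr //; nra.
lra.
Qed.

Section Limit.
Variable L : A.
Hypothesis sqrt_approx_cvg : forall e : R, 0 < e ->
  exists N : nat, forall n : nat, (N <= n)%N -> nrm (sqrt_approx n - L) < e.

(* Each algebraic identity satisfied by the iterates passes to the limit:
   the defect is bounded by a multiple of nrm (sqrt_approx N - L) for large N. *)
Lemma limit_defect_eq0 (D : A) (K : R) : 0 <= K ->
  (forall N, nrm D <= K * (nrm (sqrt_approx N - L) + nrm (sqrt_approx N.+1 - L))) ->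
  D = 0.
Proof.
move=> K0 bound; apply: nrm_small_eq0 => e e0.
pose d := e / (2 * K + 1).
have K1 : 0 < 2 * K + 1 by rewrite ltr_wpDl ?mulr_ge0.
have dE : d * (2 * K + 1) = e by rewrite /d mulfVK // gt_eqF.
have [N HN] := sqrt_approx_cvg (divr_gt0 e0 K1).
have h1 := HN N (leqnn N); have h2 := HN N.+1 (leqnSn N).
apply: (le_trans (bound N)); rewrite -/d in h1 h2.
have := nrm_ge0 (sqrt_approx N - L); have := nrm_ge0 (sqrt_approx N.+1 - L); nra.
Qed.

Lemma limit_sa : star L = L.
Proof.
apply/eqP; rewrite -subr_eq0; apply/eqP; apply: (limit_defect_eq0 (K := 2)) => // N.
have -> : star L - L = star (L - sqrt_approx N) + (sqrt_approx N - L).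
  by rewrite starB approx_sa addrA subrK.
apply: (le_trans (nrmD _ _)); rewrite nrm_star nrmB_sym.
have := nrm_ge0 (sqrt_approx N - L); have := nrm_ge0 (sqrt_approx N.+1 - L); lra.
Qed.

Lemma limit_comm x : x * a = a * x -> x * L = L * x.
Proof.
move=> xa; apply/eqP; rewrite -subr_eq0; apply/eqP.
apply: (limit_defect_eq0 (K := 2 * nrm x)) => [|N]; first by rewrite mulr_ge0.
have -> : x * L - L * x = (sqrt_approx N - L) * x - x * (sqrt_approx N - L).
  rewrite mulrBl mulrBr (approx_comm xa N) opprB addrC.
  by rewrite [RHS]addrC addrA subrK addrC.
apply: (le_trans (nrmD _ _)); rewrite nrmN.
have := nrmM (sqrt_approx N - L) x; have := nrmM x (sqrt_approx N - L).
have := nrm_ge0 x; have := nrm_ge0 (sqrt_approx N - L).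
have := nrm_ge0 (sqrt_approx N.+1 - L); nra.
Qed.

Lemma limit_fixpoint : L = half *: (a + L * L).
Proof.
apply/eqP; rewrite -subr_eq0; apply/eqP.
apply: (limit_defect_eq0 (K := 1 + nrm L)) => [|N]; first by rewrite addr_ge0.
have -> : L - half *: (a + L * L) = - (sqrt_approx N.+1 - L)
    + half *: (sqrt_approx N * (sqrt_approx N - L) + (sqrt_approx N - L) * L).
  rewrite mulrBr mulrBl addrA subrK [sqrt_approx N.+1]/= opprB -addrA; congr (_ + _).
  by rewrite -!scalerN -scalerDr !opprD -addrA addKr.
apply: (le_trans (nrmD _ _)); rewrite nrmN nrm_half.
have := le_trans (approx_le N) (proj2 (andP (majorant_bounds N))).
have := nrmM (sqrt_approx N) (sqrt_approx N - L); have := nrmM (sqrt_approx N - L) L.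
have := nrmD (sqrt_approx N * (sqrt_approx N - L)) ((sqrt_approx N - L) * L).
have := nrm_ge0 (sqrt_approx N - L); have := nrm_ge0 (sqrt_approx N);
have := nrm_ge0 L; have := nrm_ge0 (sqrt_approx N.+1 - L); nra.
Qed.

End Limit.

Lemma sqrt_one_sub : exists m, [/\ star m = m, m * m = 1 - a &
   forall x, x * a = a * x -> x * m = m * x].
Proof.
have [L HL] := nrm_complete HA approx_cauchy.
have LL : L * L = L + L - a.
  rewrite [X in X + _ - _](limit_fixpoint HL) [X in _ + X - _](limit_fixpoint HL).
  by rewrite half_add_half addrC addKr.
exists (1 - L); split.
- by rewrite starB star1 (limit_sa HL).
- rewrite !mulrBl !mulrBr !mul1r ?mulr1 LL.
  by rewrite opprB [L + L - a - L]addrAC addrK addrA subrK.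
- by move=> x xa; rewrite mulrBr mulrBl mulr1 mul1r (limit_comm HL).
Qed.
End SquareRoot.

Lemma half_double (x : A) : half *: (x + x) = x.
Proof. by rewrite scalerDr half_add_half. Qed.

Lemma double_eq0 (x : A) : x + x = 0 -> x = 0.
Proof. by move=> x2; rewrite -[x]half_double x2 scaler0. Qed.

(* A self-adjoint element cannot square to -1: otherwise (y + i) vanishes,
   since star (y + i) * (y + i) = y^2 + 1, and y = -i is not self-adjoint. *)
Lemma sa_sqr_neqN1 y : star y = y -> y * y <> -1.
Proof.
move=> sy yy; pose t := y + 'i%:A.
have st : star t = y - 'i%:A by rewrite starD sy star_scalar conjCi scaleNr.
have /star_mul_eq0 t0 : star t * t = 0.
  rewrite st mulrBl !mulrDr yy !mulr_algr !mulr_algl scalerA -expr2 sqrCi.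
  by rewrite scaleN1r [_ + - 1]addrC subrr.
have yE : y = - 'i%:A by apply/eqP; rewrite -addr_eq0; apply/eqP.
have /double_eq0/eqP : 'i%:A + 'i%:A = 0 :> A.
  move: sy; rewrite yE starN star_scalar conjCi scaleNr opprK => {1}->.
  by rewrite addNr.
by rewrite scaler_eq0 oner_eq0 orbF (negPf (neq0Ci _)).
Qed.

(* A self-adjoint m and a skew-adjoint r that commute and have the same square:
   then star (m + r) * (m + r) = m^2 - r^2 = 0, so m + r = 0 = m - r. *)
Lemma sa_skew_sqr_eq m r : star m = m -> star r = - r ->
  m * r = r * m -> m * m = r * r -> r = 0.
Proof.
move=> sm sr mr mm.
have /star_mul_eq0 mr0 : star (m + r) * (m + r) = 0.
  by rewrite starD sm sr mulrDr !mulrDl mm mr !mulNr addrA subrK subrr.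
have mr1 : m - r = 0 by rewrite -sm -sr -starD mr0 star0.
apply: double_eq0.
have -> : r + r = (m + r) - (m - r) by rewrite opprB [RHS]addrC addrA subrK.
by rewrite mr0 mr1 subrr.
Qed.

(* With s, r the self-adjoint and skew-adjoint halves of z one finds
   r^2 = 1 + s^2 = 1 - a for the self-adjoint contraction a = -s^2;
   the square root m of 1 - a then has m^2 = r^2, so r = 0 and z is
   self-adjoint with z^2 = -1. *)
Lemma no_neg_unitary z : star z * z = -1 -> z * star z = -1 -> False.
Proof.
move=> zz zz'.
pose s := half *: (z + star z); pose r := half *: (z - star z).
have ss : star s = s by rewrite star_real_scale starD starK addrC.
have sr : star r = - r by rewrite star_real_scale starB starK -scalerN opprB.
have nz : nrm z = 1.
  have := nrm_Cstar HA z; rewrite zz nrmN nrm1 => /esym/eqP.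
  by rewrite sqrp_eq1 ?nrm_ge0 // => /eqP.
have ns : nrm s <= 1.
  rewrite nrm_half; have := nrmD z (star z); rewrite nrm_star nz; lra.
have zc : GRing.comm z (star z) by rewrite /GRing.comm zz zz'.
have zc' := commr_sym zc.
have rs : GRing.comm r s.
  rewrite /GRing.comm /r /s -!scalerAl -!scalerAr; congr (_ *: (_ *: _)).
  by symmetry; apply: commrB; apply: commr_sym; apply: commrD => //; apply: commr_refl.
have rr : r * r = 1 + s * s.
  apply/eqP; rewrite -subr_eq -[1]half_double -[1 + 1]half_double.
  rewrite /r /s -!scalerAl -!scalerAr -!scalerBr; apply/eqP; congr (_ *: (_ *: _)).
  by rewrite sqrB_sub_sqrD zz zz' opprD opprK.
have a_sa : star (- (s * s)) = - (s * s) by rewrite starN starM ss.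
have a_le1 : nrm (- (s * s)) <= 1.
  rewrite nrmN; apply: (le_trans (nrmM _ _)).
  by rewrite -[1]mulr1 ler_pM ?nrm_ge0.
have [m [sm mm cm]] := sqrt_one_sub a_sa a_le1.
have r0 : r = 0.
  apply: (sa_skew_sqr_eq sm sr); last by rewrite mm opprK rr.
  by symmetry; apply: cm; rewrite mulrN mulNr; congr (- _); apply: commrM.
have zsa : star z = z.
  move/eqP: r0; rewrite scaler_eq0 subr_eq0 => /orP[|/eqP//].
  by rewrite /half fmorph_eq0 invr_eq0 pnatr_eq0.
by apply: (sa_sqr_neqN1 zsa); rewrite -{1}zsa.
Qed.

Lemma scalar_inj (c d : R[i]) : c%:A = d%:A :> A -> c = d.
Proof. exact: (fmorph_inj (in_alg A)). Qed.

(* If star a * a = a * star a = c 1 with a nonzero, then c > 0 by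
   no_neg_unitary, and a rescaled by 1 / sqrt c is unitary. *)
Lemma normalize_unitary a (c : R[i]) : a != 0 ->
  star a * a = c%:A -> a * star a = c%:A ->
  exists2 k : R[i], k != 0 & unitary_elt star (k *: a).
Proof.
move=> a0 ac ca.
have c0 : c != 0.
  by apply: contraNneq a0 => c0; apply/eqP/star_mul_eq0; rewrite ac c0 scale0r.
have c_real : c \is Num.real.
  by rewrite CrealE; apply/eqP/scalar_inj; rewrite -star_scalar -ac starM starK.
have rescale k : k \is Num.real -> star (k *: a) * (k *: a) = (k * k * c)%:A /\
    (k *: a) * star (k *: a) = (k * k * c)%:A.
  move=> k_real; rewrite (star_scale HA) conj_Creal // -!scalerAl -!scalerAr.
  by rewrite ac ca !scalerA.
have [c_neg|c_pos] : c < 0 \/ 0 < c.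
  case: (real_ltgtP c_real (real0 _)) => [c_lt0|c_gt0|c_eq0]; [by left|by right|].
  by rewrite c_eq0 eqxx in c0.
- pose k := (sqrtC (- c))^-1.
  have k_real : k \is Num.real by rewrite realV ger0_real // sqrtC_ge0 oppr_ge0 ltW.
  have kk : k * k * c = -1 by rewrite /k -invfM -expr2 sqrtCK invrN mulNr mulVf.
  have [e1 e2] := rescale k k_real.
  by exfalso; apply: (no_neg_unitary (z := k *: a)); rewrite ?e1 ?e2 kk scaleN1r.
- pose k := (sqrtC c)^-1.
  have k_real : k \is Num.real by rewrite realV ger0_real // sqrtC_ge0 ltW.
  have kk : k * k * c = 1 by rewrite /k -invfM -expr2 sqrtCK mulVf.
  have [e1 e2] := rescale k k_real.
  by exists k; [rewrite invr_eq0 sqrtC_eq0 | split; rewrite ?e1 ?e2 kk scale1r].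
Qed.

Definition zero_or_unitary_line (P : A -> Prop) : Prop :=
  (forall a, P a -> a = 0) \/
  (exists w, unitary_elt star w /\ forall a, P a <-> exists c : R[i], a = c *: w).

Section FixedSpace.
Variables (theta : A -> A) (v : A).
Hypothesis theta_aut : is_star_aut star theta.
Hypothesis theta_erg : top_ergodic theta.
Hypothesis v_unitary : unitary_elt star v.

Lemma fixed_theta a : v * theta a = a -> theta a = star v * a.
Proof. by case: v_unitary => vv _ va; rewrite -{2}va mulrA vv mul1r. Qed.

(* Two solutions a, b have a scalar inner product star a * b, since
   theta (star a * b) = star a * v * star v * b = star a * b. *)
Lemma fixed_inner_scalar a b : v * theta a = a -> v * theta b = b ->
  exists c : R[i], star a * b = c%:A.
Proof.
move=> /fixed_theta ta /fixed_theta tb.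
case: theta_aut v_unitary => _ [_ [tM [_ [tstar _]]]] [_ vv'].
apply/theta_erg.
by rewrite tM tstar ta tb starM starK -mulrA (mulrA v) vv' mul1r.
Qed.

(* Assume theta is intertwined with Ad(v) o theta through some injective map
   beta fixing the scalars, as alpha^n does for the cocycle.  Then for a
   solution a, beta (a * star a) is theta-fixed, so a * star a is a scalar too. *)
Variable beta : A -> A.
Hypothesis beta_inj : injective beta.
Hypothesis beta_scalar : forall c : R[i], beta c%:A = c%:A.
Hypothesis theta_beta : forall y, theta (beta y) = beta (v * theta y * star v).

Lemma fixed_outer_scalar a : v * theta a = a -> exists c : R[i], a * star a = c%:A.
Proof.
case: theta_aut => _ [_ [tM [_ [tstar _]]]] va.
have /theta_erg [c bc] : theta (beta (a * star a)) = beta (a * star a).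
  by rewrite theta_beta tM tstar mulrA va -mulrA -starM va.
by exists c; apply: beta_inj; rewrite bc beta_scalar.
Qed.

(* The dichotomy: a nonzero solution a has star a * a = a * star a = c 1,
   so a rescaled is a unitary w; any solution b satisfies
   c b = a * (star a * b), a multiple of a. *)
Lemma fixed_space_dichotomy : zero_or_unitary_line (fun a => v * theta a = a).
Proof.
have [[a [va a0]]|none] := classic (exists a, v * theta a = a /\ a <> 0); last first.
  by left => a va; apply: NNPP => a0; apply: none; exists a.
move/eqP: a0 => a0.
have [c aa] := fixed_inner_scalar va va.
have [d aa'] := fixed_outer_scalar va.
have c0 : c != 0.
  by apply: contraNneq a0 => c0; apply/eqP/star_mul_eq0; rewrite aa c0 scale0r.
have dc : d = c.
  have : a * (star a * a) = (a * star a) * a by rewrite mulrA.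
  rewrite aa aa' mulr_algr mulr_algl => /eqP.
  by rewrite -subr_eq0 -scalerBl scaler_eq0 subr_eq0 (negPf a0) orbF => /eqP.
rewrite {}dc in aa'.
have [k k0 w_unitary] := normalize_unitary a0 aa aa'.
right; exists (k *: a); split=> // b; split.
- move=> vb; have [e ab] := fixed_inner_scalar va vb.
  have cb : c *: b = e *: a by rewrite -mulr_algl -aa' -mulrA ab mulr_algr.
  exists (e / c / k).
  by rewrite scalerA divfK // mulrC -scalerA -cb scalerA mulVf // scale1r.
- case=> e ->; case: theta_aut => _ [tZ _].
  by rewrite !tZ -!scalerAr va.
Qed.
End FixedSpace.

Section StarAut.
Variables (f g : A -> A).
Hypothesis f_aut : is_star_aut star f.

Lemma star_aut_scalar (c : R[i]) : f c%:A = c%:A.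
Proof. by case: f_aut => _ [fZ [_ [f1 _]]]; rewrite fZ f1. Qed.

Lemma star_aut_unitary w : unitary_elt star w -> unitary_elt star (f w).
Proof.
case: f_aut => _ [_ [fM [f1 [fstar _]]]] [ww ww'].
by split; rewrite -fstar -fM ?ww ?ww' f1.
Qed.

Hypotheses (fgK : cancel f g) (gfK : cancel g f).

Lemma star_aut_inv : is_star_aut star g.
Proof.
case: f_aut => fD [fZ [fM [f1 [fstar _]]]].
have f_inj := can_inj fgK.
split; [|split; [|split; [|split; [|split]]]].
- by move=> x y; apply: f_inj; rewrite fD !gfK.
- by move=> c x; apply: f_inj; rewrite fZ !gfK.
- by move=> x y; apply: f_inj; rewrite fM !gfK.
- by apply: f_inj; rewrite f1 gfK.
- by move=> x; apply: f_inj; rewrite fstar !gfK.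
- exact: Bijective gfK fgK.
Qed.

Lemma iter_can j : cancel (iter j f) (iter j g).
Proof. by elim: j => [//|j IH] x; rewrite iterSr iterS fgK IH. Qed.
End StarAut.

Lemma star_aut_iter (f : A -> A) j :
  is_star_aut star f -> is_star_aut star (iter j f).
Proof.
move=> f_aut; elim: j => [|j [iD [iZ [iM [i1 [istar [h hK Kh]]]]]]].
  by split; [|split; [|split; [|split; [|split]]]] => //; exists id.
case: f_aut => fD [fZ [fM [f1 [fstar [k kK Kk]]]]].
split; [|split; [|split; [|split; [|split]]]] => /=.
- by move=> x y; rewrite iD fD.
- by move=> c x; rewrite iZ fZ.
- by move=> x y; rewrite iM fM.
- by rewrite i1 f1.
- by move=> x; rewrite istar fstar.
- by exists (h \o k) => x /=; [rewrite kK hK | rewrite Kh Kk].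
Qed.

Lemma unitary_star w : unitary_elt star w -> unitary_elt star (star w).
Proof. by case=> ww ww'; split; rewrite starK. Qed.

Lemma theta_inv_intertwine (theta f g : A -> A) (x : A) :
  is_star_aut star f -> cancel f g -> cancel g f -> star x * x = 1 ->
  (forall y, theta (f y) = x * f (theta y) * star x) ->
  forall y, theta (g y) = g (star x) * g (theta y) * star (g (star x)).
Proof.
move=> [_ [_ [fM [_ [fstar _]]]]] fgK gfK xx theta_f y.
have := theta_f (g y); rewrite gfK => ->.
apply: (can_inj fgK); rewrite !fM fstar !gfK starK.
by rewrite !mulrA xx mul1r -mulrA xx mulr1.
Qed.

Section Cocycle.
Variables (theta f g : A -> A) (x : A).
Hypotheses (theta_aut : is_star_aut star theta) (theta_erg : top_ergodic theta).
Hypotheses (f_aut : is_star_aut star f) (fgK : cancel f g) (gfK : cancel g f).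
Hypothesis x_unitary : unitary_elt star x.
Hypothesis theta_f : forall y, theta (f y) = x * f (theta y) * star x.

Definition iter_cocycle (j : nat) : A := \prod_(k < j) iter k f x.

Lemma iter_cocycleS j : iter_cocycle j.+1 = x * f (iter_cocycle j).
Proof.
case: f_aut => _ [_ [fM [f1 _]]].
by rewrite /iter_cocycle big_ord_recl (big_morph f fM f1).
Qed.

Lemma iter_cocycle_unitary j : unitary_elt star (iter_cocycle j).
Proof.
elim: j => [|j [QQ QQ']].
  by rewrite /unitary_elt /iter_cocycle big_ord0 star1 mulr1.
case: x_unitary (star_aut_unitary f_aut (conj QQ QQ')) => xx xx' [fQ fQ'].
rewrite /unitary_elt iter_cocycleS starM; split.
- by rewrite -mulrA (mulrA (star x)) xx mul1r fQ.
- by rewrite -mulrA (mulrA (f _)) fQ' mul1r xx'.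
Qed.

Lemma theta_iter_cocycle j y :
  theta (iter j f y) = iter_cocycle j * iter j f (theta y) * star (iter_cocycle j).
Proof.
case: f_aut => _ [_ [fM [_ [fstar _]]]].
elim: j => [|j IH]; first by rewrite /iter_cocycle big_ord0 star1 mul1r mulr1.
by rewrite iterS theta_f IH iter_cocycleS !fM starM fstar !mulrA.
Qed.

(* The fixed space of v = g^j (Q_j) is {0} or a unitary line: beta = f^j
   satisfies theta o beta = beta o Ad(v) o theta. *)
Lemma iter_cocycle_dichotomy j :
  zero_or_unitary_line (fun a => iter j g (iter_cocycle j) * theta a = a).
Proof.
have beta_aut := star_aut_iter j f_aut.
have betaK := iter_can fgK j; have betaK' := iter_can gfK j.
have g_aut := star_aut_inv f_aut fgK gfK.
have v_unitary := star_aut_unitary (star_aut_iter j g_aut) (iter_cocycle_unitary j).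
apply: (fixed_space_dichotomy theta_aut theta_erg v_unitary (can_inj betaK)
          (star_aut_scalar beta_aut)).
case: beta_aut => _ [_ [bM [_ [bstar _]]]] y.
by rewrite theta_iter_cocycle !bM bstar betaK'.
Qed.
End Cocycle.

Lemma aut_pow_opp_Posz (f g : A -> A) j : aut_pow f g (- Posz j) = iter j g.
Proof. by case: j. Qed.

Lemma cocycle_Negz (f g : A -> A) u j :
  cocycle star f g u (Negz j) = iter_cocycle g (g (star u)) j.+1.
Proof. by apply: eq_bigr => k _; rewrite aut_pow_opp_Posz iterSr. Qed.
End CstarAlgebra.

(* For n = j >= 0, W_n is the fixed space of
   alpha^(-j)(u_j) with u_j the alpha-cocycle of u; for n = -(j+1) it is the
   fixed space of alpha^(j+1)(u_n) with u_n the alpha^(-1)-cocycle of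
   alpha^(-1)(star u). *)
Theorem mainTheorem7 (R : realType) (A : algType R[i])
  (star : A -> A) (nrm : A -> R) (HA : is_unital_Cstar star nrm)
  (theta alpha alpha_inv : A -> A)
  (Htheta : is_star_aut star theta) (Halpha : is_star_aut star alpha)
  (Halpha_inv1 : cancel alpha alpha_inv) (Halpha_inv2 : cancel alpha_inv alpha)
  (u : A) (Hu : unitary_elt star u)
  (Hcomm : forall a : A, u * alpha (theta a) = theta (alpha a) * u)
  (Herg : top_ergodic theta) :
  forall n : int,
    (forall a : A, W_space star theta alpha alpha_inv u n a -> a = 0) \/
    (exists w : A, unitary_elt star w /\
       forall a : A, W_space star theta alpha alpha_inv u n a <->
                     exists c : R[i], a = c *: w).
Proof.
move=> n; change (zero_or_unitary_line star (W_space star theta alpha alpha_inv u n)).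
have theta_alpha y : theta (alpha y) = u * alpha (theta y) * star u.
  by case: Hu => _ uu'; rewrite Hcomm -mulrA uu' mulr1.
case: n => j.
- have -> : W_space star theta alpha alpha_inv u j =
      (fun a => iter j alpha_inv (iter_cocycle alpha u j) * theta a = a).
    by rewrite /W_space aut_pow_opp_Posz.
  exact (iter_cocycle_dichotomy HA Htheta Herg Halpha Halpha_inv1 Halpha_inv2 Hu
           theta_alpha j).
- have alpha_inv_aut := star_aut_inv Halpha Halpha_inv1 Halpha_inv2.
  have x_unitary := star_aut_unitary alpha_inv_aut (unitary_star HA Hu).
  have theta_alpha_inv :=
    theta_inv_intertwine HA Halpha Halpha_inv1 Halpha_inv2 (proj1 Hu) theta_alpha.
  have -> : W_space star theta alpha alpha_inv u (Negz j) =
      (fun a => iter j.+1 alpha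
         (iter_cocycle alpha_inv (alpha_inv (star u)) j.+1) * theta a = a).
    by rewrite /W_space cocycle_Negz.
  exact (iter_cocycle_dichotomy HA Htheta Herg alpha_inv_aut Halpha_inv2
           Halpha_inv1 x_unitary theta_alpha_inv j.+1).
Qed.
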